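(* Let $F$ be a field, $U,V$ finite-dimensional $F$-vector spaces, $A:U\times U\to V$ an alternating bilinear map whose image spans $V$, $u_1<\dots<u_n$ an ordered basis of $U$, and $\mathcal{B}$, $\mathcal{W}(\mathcal{B})$, $f$, $W(\mathcal{B})$ as in the context. Then (i) the elements $f(\{a,b,c\})$, $\{a,b,c\}\in\mathcal{W}(\mathcal{B})$, are linearly independent in $V\otimes U$ (in particular they are pairwise distinct); and (ii) $f:\mathcal{W}(\mathcal{B})\to W(\mathcal{B})$ is a bijection.
   Context: $\mathcal{Y}$ is the set of $2$-element subsets of $\{1,\dots,n\}$, totally ordered by $\{i,j\}<\{r,s\}$ iff $\max\{i,j\}<\max\{r,s\}$, or the maxima are equal to $a$ and the remaining element of $\{i,j\}\setminus\{a\}$ is smaller than that of $\{r,s\}\setminus\{a\}$. $\mathcal{B}$ is constructed as follows: $\mathcal{B}_0=B_0=\emptyset$; inductively let $\{i,j\}$ ($i<j$) be the least element of $\mathcal{Y}$ with $A(u_i,u_j)\notin\operatorname{span}(B_k)$, and set $\mathcal{B}_{k+1}=\mathcal{B}_k\cup\{\{i,j\}\}$, $B_{k+1}=B_k\cup\{A(u_i,u_j)\}$; stop at $k=m=\dim V$ and put $\mathcal{B}=\mathcal{B}_m$. $\Psi:U\otimes_F U\otimes_F U\to V\otimes_F U$ is the linear map with $\Psi(x\otimes y\otimes z)=A(x,y)\otimes z+A(y,z)\otimes x+A(z,x)\otimes y$. $\mathcal{W}(\mathcal{B})$ is the set of $3$-element subsets of $\{1,\dots,n\}$ containing some $2$-element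 subset belonging to $\mathcal{B}$. For $\{a,b,c\}\in\mathcal{W}(\mathcal{B})$ with elements listed as $i<j<k$, $f(\{a,b,c\})=\Psi(u_i\otimes u_j\otimes u_k)$; $W(\mathcal{B})=f(\mathcal{W}(\mathcal{B}))$. *)

From HB Require Import structures.
From mathcomp Require Import all_boot all_order all_algebra.
Set Implicit Arguments. Unset Strict Implicit. Unset Printing Implicit Defensive.
Import GRing.Theory.
Local Open Scope ring_scope.

(* Tensor product V (x)_F U, modelled canonically (finite dimension) as
   'Hom(U^*, V), where U^* = 'Hom(U, F^o).  x (x) z  is  phi |-> phi z *: x. *)
Section Tensor.
Variables (F : fieldType) (U V : vectType F).
Definition tensVU := 'Hom('Hom(U, F^o), V).
Definition tens (x : V) (z : U) : tensVU :=
  linfun (fun phi : 'Hom(U, F^o) => (phi z : F) *: x).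
End Tensor.

Section Construction.
Variables (F : fieldType) (U V : vectType F) (A : U -> U -> V) (n : nat)
          (u : n.-tuple U).

Definition Psi (x y z : U) : tensVU U V :=
  tens (A x y) z + tens (A y z) x + tens (A z x) y.

(* The set Y of 2-subsets {i,j}, i<j, listed as pairs (i,j) in the order of Y:
   first by the maximum j, then by the remaining element i. *)
Definition Ylist : seq ('I_n * 'I_n) :=
  flatten [seq [seq (i, j) | i <- filter (fun i : 'I_n => (i < j)%N) (enum 'I_n)]
          | j : 'I_n <- enum 'I_n].

Definition Aval (p : 'I_n * 'I_n) : V := A (u`_p.1) (u`_p.2).

Definition Bstep (Bs : seq ('I_n * 'I_n)) : seq ('I_n * 'I_n) :=
  match [seq p <- Ylist | Aval p \notin <<map Aval Bs>>%VS] with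
  | p :: _ => rcons Bs p
  | [::] => Bs
  end.

Definition calB : seq ('I_n * 'I_n) := iter (\dim (fullv : {vspace V})) Bstep [::].

Definition calW : {set {set 'I_n}} :=
  [set X : {set 'I_n} | (#|X| == 3)%N &&
     has (fun p : 'I_n * 'I_n => (p.1 \in X) && (p.2 \in X)) calB].

(* f({a,b,c}) = Psi(u_i (x) u_j (x) u_k) with i<j<k the elements listed *)
Definition fW (T : {set 'I_n}) : tensVU U V :=
  let s := [seq u`_i | i : 'I_n <- enum T] in Psi s`_0 s`_1 s`_2.

Definition WB : seq (tensVU U V) := [seq fW X | X in calW].
End Construction.

(* Order 3-subsets by their colex rank [sum_pow2 X = \sum_(z in X) 2^z] and take a
   relation [\sum_X k_X f(X) = 0].  Let X be of maximal rank with [k_X != 0]; it contains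
   a pair p of B, with third element l.  Contracting the U-factor against the l-th
   coordinate form sends f(X) to +-A(p), kills every f(Z) with l not in Z, and sends the
   other f(Z) to +-A(q) with q = Z \ {l} strictly before p in the order of Y.  The greedy
   choice of p says exactly that A(p) is not in the span of the A-values of its
   predecessors, so k_X = 0.  Part (ii) follows from linear independence. *)

From HB Require Import structures.
From mathcomp Require Import all_boot all_order all_algebra zify.
Set Implicit Arguments. Unset Strict Implicit. Unset Printing Implicit Defensive.
Import GRing.Theory.
Local Open Scope ring_scope.

Lemma filter_cons_first (T : eqType) (a : pred T) (s : seq T) p r :
  filter a s = p :: r ->
  [/\ p \in s, a p & {in take (index p s) s, forall q, ~~ a q}].
Proof.
elim: s => //= x s IH; case ax: (a x).
  by case=> <- _; rewrite eqxx mem_head ax.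
move=> /IH [ps ap notin]; have xp : x != p by apply: contraFneq ax => ->.
rewrite (negbTE xp) /= inE ps orbT; split=> // q.
by rewrite inE => /predU1P[->|]; [rewrite ax | exact: notin].
Qed.

Lemma mem_take_index_pairwise (T : eqType) (r : rel T) (s : seq T) x y :
  (forall a b, r a b -> ~~ r b a) -> pairwise r s ->
  x \in s -> y \in s -> r x y -> x \in take (index y s) s.
Proof.
move=> asym; elim: s => //= z s IH /andP[rz rs].
case: (eqVneq z y) => [<-|zy] /=.
  move=> /predU1P[->|xs] _ rxz; have := asym _ _ rxz; first by rewrite rxz.
  by rewrite (allP rz x xs).
move=> /predU1P[->|xs]; rewrite inE (eq_sym y) (negbTE zy) => ys rxy; first exact: mem_head.
by rewrite inE IH ?orbT.
Qed.

Section TriangularFree.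
Variables (K : fieldType) (W V : vectType K) (T : eqType) (g : T -> W) (w : T -> nat).

Lemma free_map_triangular (s : seq T) : uniq s ->
  (forall X, X \in s -> exists (f : 'Hom(W, V)) (S : {vspace V}),
     f (g X) \notin S /\ {in s, forall Y, Y != X -> (w Y <= w X)%N -> f (g Y) \in S}) ->
  free (map g s).
Proof.
move=> us tri; pose heavier X Y := (w Y <= w X)%N.
have heavier_trans : transitive heavier by move=> Y X Z XY YZ; exact: leq_trans YZ XY.
have heavier_total : total heavier by move=> X Y; apply: leq_total.
rewrite -(perm_free (perm_map g (permEl (perm_sort heavier s)))).
have : pairwise heavier (sort heavier s) by rewrite -sorted_pairwise ?sort_sorted.
have : uniq (sort heavier s) by rewrite sort_uniq.
have : {subset sort heavier s <= s} by move=> X; rewrite mem_sort.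
elim: (sort heavier s) => [|X r IH] sub; first by rewrite nil_free.
move=> /andP[X_r ur] /andP[Xr pr].
rewrite free_cons IH ?andbT // => [|Y Yr]; last by apply: sub; rewrite inE Yr orbT.
have [f [S [fX fS]]] := tri X (sub X (mem_head X r)).
apply: contra fX => /(memv_img f); rewrite limg_span; apply/subvP/span_subvP.
move=> _ /mapP[_ /mapP[Y Yr ->] ->]; apply: fS; first by apply: sub; rewrite inE Yr orbT.
  by apply: contraNneq X_r => <-.
exact: (allP Xr).
Qed.

End TriangularFree.

Section Greedy.
Variables (K : fieldType) (V : vectType K) (T : eqType) (Y : seq T) (val : T -> V).

Definition prefix_span (p : T) : {vspace V} := <<map val (take (index p Y) Y)>>%VS.

Definition greedy_step (Bs : seq T) : seq T :=
  if [seq p <- Y | val p \notin <<map val Bs>>%VS] is p :: _ then rcons Bs p else Bs.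

Definition greedy_invariant (Bs : seq T) : Prop :=
  {in Bs, forall p, p \in Y /\ val p \notin prefix_span p}
  /\ exists k, <<map val Bs>>%VS = <<map val (take k Y)>>%VS.

Lemma greedy_step_invariant Bs : greedy_invariant Bs -> greedy_invariant (greedy_step Bs).
Proof.
move=> [fresh [k spanBs]]; rewrite /greedy_step.
case E: [seq p <- Y | _] => [|p r]; first by split=> //; exists k.
have [pY p_new before_p] := filter_cons_first E.
have k_le : (k <= index p Y)%N.
  rewrite leqNgt; apply: contra p_new => lt_pk; rewrite spanBs memv_span // map_f //.
  by rewrite -(nth_index p pY) -(nth_take p lt_pk) mem_nth // size_take_min ltn_min lt_pk index_mem.
have spanBs_prefix : <<map val Bs>>%VS = prefix_span p.
  apply/eqP; rewrite eqEsubv; apply/andP; split.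
    rewrite spanBs; apply/span_subvP=> _ /mapP[q qk ->]; apply: memv_span; apply: map_f.
    by rewrite -(take_takel _ k_le) in qk; apply: mem_take qk.
  by apply/span_subvP=> _ /mapP[q qp ->]; have := before_p q qp; rewrite negbK.
split.
  move=> q; rewrite mem_rcons inE => /predU1P[->|]; last exact: fresh.
  by rewrite -spanBs_prefix.
exists (index p Y).+1; rewrite (take_nth p) ?index_mem // nth_index //.
by rewrite !map_rcons -!cats1 !span_cat spanBs_prefix.
Qed.

Lemma greedy_iter_fresh m :
  {in iter m greedy_step [::], forall p, p \in Y /\ val p \notin prefix_span p}.
Proof.
suff [] : greedy_invariant (iter m greedy_step [::]) by [].
elim: m => [|m IH]; last exact: greedy_step_invariant.
by split=> //; exists 0%N; rewrite take0.
Qed.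

End Greedy.

Lemma colex_of_expn2_le (a b c d : nat) : (a < b)%N -> (c < d)%N ->
  (2 ^ a + 2 ^ b <= 2 ^ c + 2 ^ d)%N -> (a, b) != (c, d) ->
  (b < d)%N || (b == d) && (a < c)%N.
Proof.
move=> ab cd le ne; case: (ltngtP b d) => // [db|bd]; last first.
  subst d; case: (ltngtP a c) => // [ca|ac]; last by rewrite ac eqxx in ne.
  by move: le; rewrite leq_add2r leqNgt ltn_exp2l ?ca.
have : (2 ^ c < 2 ^ d)%N by rewrite ltn_exp2l.
have : (2 ^ d.+1 <= 2 ^ b)%N by rewrite leq_exp2l.
rewrite expnS; lia.
Qed.

Section Colex.
Variable n : nat.

Definition colex_lt (p q : 'I_n * 'I_n) : bool :=
  (p.2 < q.2)%N || (p.2 == q.2 :> nat) && (p.1 < q.1)%N.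

Lemma colex_lt_asym p q : colex_lt p q -> ~~ colex_lt q p.
Proof. rewrite /colex_lt; lia. Qed.

Lemma mem_Ylist p : (p \in Ylist n) = (p.1 < p.2)%N.
Proof.
apply/flatten_mapP/idP => [[j _ /mapP[i]]|lt12].
  by rewrite mem_filter => /andP[ij _] ->.
exists p.2; first by rewrite mem_enum.
by apply/mapP; exists p.1; [rewrite mem_filter mem_enum lt12 | case: p lt12].
Qed.

Lemma Ylist_colex : pairwise colex_lt (Ylist n).
Proof.
have enum_lt : pairwise (fun a b : 'I_n => (a < b)%N) (enum 'I_n).
  have := iota_ltn_sorted 0 n.
  by rewrite -val_enum_ord sorted_pairwise ?pairwise_map //; apply: ltn_trans.
(* Induct on the outer enumeration only. *)
move: (enum_lt); rewrite /Ylist; elim: {1 3}(enum 'I_n) => //= j e IH /andP[j_e pe].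
rewrite pairwise_cat IH // andbT; apply/andP; split.
  apply/allrelP => _ _ /mapP[i _ ->] /flatten_mapP[k ke /mapP[i' _ ->]].
  by rewrite /colex_lt /= (allP j_e k ke).
rewrite pairwise_map; apply/pairwise_filter/(sub_pairwise _ enum_lt) => a b /= ab.
by rewrite /colex_lt /= eqxx ab orbT.
Qed.

Definition sum_pow2 (X : {set 'I_n}) : nat := \sum_(z in X) 2 ^ z.

Lemma sum_pow2_set2 x y : x != y -> sum_pow2 [set x; y] = (2 ^ x + 2 ^ y)%N.
Proof. by move=> xy; rewrite /sum_pow2 big_setU1 ?inE // big_set1. Qed.

Lemma sum_pow2D1 (X : {set 'I_n}) l : l \in X -> sum_pow2 X = (2 ^ l + sum_pow2 (X :\ l))%N.
Proof. exact: big_setD1. Qed.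

End Colex.

Section TensorEvaluation.
Variables (F : fieldType) (U V : vectType F).

Definition tens_fun (x : V) (z : U) (phi : 'Hom(U, F^o)) : V := (phi z : F) *: x.

Fact tens_fun_is_linear x z : linear (tens_fun x z).
Proof. by move=> a f g; rewrite /tens_fun add_lfunE scale_lfunE scalerDl scalerA. Qed.

HB.instance Definition _ x z :=
  GRing.isLinear.Build F _ _ _ (tens_fun x z) (tens_fun_is_linear x z).

Lemma tens_lfunE (x : V) (z : U) phi : tens x z phi = (phi z : F) *: x.
Proof. by rewrite /tens -/(tens_fun x z) lfunE. Qed.

Definition lfun_eval (x : U) (f : 'Hom(U, V)) : V := f x.

Fact lfun_eval_is_linear x : linear (lfun_eval x).
Proof. by move=> a f g; rewrite /lfun_eval add_lfunE scale_lfunE. Qed.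

HB.instance Definition _ x :=
  GRing.isLinear.Build F _ _ _ (lfun_eval x) (lfun_eval_is_linear x).

Lemma lfun_evalE x f : linfun (lfun_eval x) f = f x.
Proof. by rewrite lfunE. Qed.

End TensorEvaluation.

Lemma set2_of_card2 (T : finType) (S : {set T}) x y :
  #|S| = 2 -> x \in S -> y \in S -> x != y -> S = [set x; y].
Proof.
move=> S2 xS yS xy; apply/eqP; rewrite eq_sym eqEcard subUset !sub1set xS yS.
by rewrite cards2 xy S2.
Qed.

Lemma enum_card3 (T : finType) (X : {set T}) : #|X| = 3 ->
  exists e0 e1 e2, [/\ enum X = [:: e0; e1; e2], e0 != e1, e0 != e2 & e1 != e2].
Proof.
move=> X3; have := enum_uniq (mem X); rewrite cardE in X3.
case: (enum X) X3 => [|e0 [|e1 [|e2 [|]]]] // _.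
by rewrite /= !inE !negb_or => /and3P[/andP[? ?] ? _]; exists e0, e1, e2.
Qed.

Section AlternatingMap.
Variables (F : fieldType) (U V : vectType F) (A : U -> U -> V).
Hypothesis HAl : forall (x : U) (a : F) (y z : U), A (a *: y + z) x = a *: A y x + A z x.
Hypothesis HAr : forall (x : U) (a : F) (y z : U), A x (a *: y + z) = a *: A x y + A x z.
Hypothesis Halt : forall x : U, A x x = 0.
Variables (n : nat) (u : n.-tuple U).
Hypothesis free_u : free u.

Definition coord_form (l : 'I_n) : 'Hom(U, F^o) := linfun (coord u l : U -> F^o).

Lemma coord_formE (l m : 'I_n) : coord_form l u`_m = (m == l)%:R.
Proof. by rewrite lfunE /= coord_free. Qed.

Lemma A_antisym x y : A y x = - A x y.
Proof.
have AlD a b c : A (a + b) c = A a c + A b c by have := HAl c 1 a b; rewrite !scale1r.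
have ArD a b c : A c (a + b) = A c a + A c b by have := HAr c 1 a b; rewrite !scale1r.
have := Halt (x + y); rewrite AlD !ArD !Halt add0r addr0 => /eqP.
by rewrite addr_eq0 => /eqP ->; rewrite opprK.
Qed.

Lemma memv_A_set2 (S : {vspace V}) (x y a b : 'I_n) : x != y ->
  [set x; y] = [set a; b] -> A u`_x u`_y \in S -> A u`_a u`_b \in S.
Proof.
move=> xy E Sxy; have : y \in [set a; b] by rewrite -E set22.
have : x \in [set a; b] by rewrite -E set21.
case/set2P=> ex /set2P[] ey; subst x y; rewrite ?eqxx // in xy.
by rewrite A_antisym rpredN in Sxy.
Qed.

Lemma Psi_lfunE x y z phi :
  Psi A x y z phi = (phi z : F) *: A x y + (phi x : F) *: A y z + (phi y : F) *: A z x.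
Proof. by rewrite /Psi !add_lfunE !tens_lfunE. Qed.

Lemma fW_coord_notin (X : {set 'I_n}) l : #|X| = 3 -> l \notin X -> fW A u X (coord_form l) = 0.
Proof.
move=> /enum_card3[e0 [e1 [e2 [eX _ _ _]]]]; rewrite -mem_enum eX !inE !negb_or.
move=> /and3P[l0 l1 l2]; rewrite /fW eX /= Psi_lfunE !coord_formE.
by rewrite !(eq_sym _ l) (negbTE l0) (negbTE l1) (negbTE l2) !scale0r !addr0.
Qed.

Lemma fW_coord_in (X : {set 'I_n}) l : #|X| = 3 -> l \in X -> exists x y,
  [/\ x != y, X :\ l = [set x; y] & fW A u X (coord_form l) = A u`_x u`_y].
Proof.
move=> X3 lX; have [e0 [e1 [e2 [eX n01 n02 n12]]]] := enum_card3 X3.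
have [n10 n20 n21] : [/\ e1 != e0, e2 != e0 & e2 != e1] by rewrite !(eq_sym e2) eq_sym.
have neqF := (negbTE n01, negbTE n02, negbTE n12, negbTE n10, negbTE n20, negbTE n21).
have memX e : (e \in X) = (e \in [:: e0; e1; e2]) by rewrite -eX mem_enum.
have [e0X e1X e2X] : [/\ e0 \in X, e1 \in X & e2 \in X].
  by rewrite !memX !inE !eqxx !orbT.
have value : fW A u X (coord_form l) =
    (e2 == l)%:R *: A u`_e0 u`_e1 + (e0 == l)%:R *: A u`_e1 u`_e2
    + (e1 == l)%:R *: A u`_e2 u`_e0 by rewrite /fW eX /= Psi_lfunE !coord_formE.
have XDl2 : #|X :\ l| = 2 by move: X3; rewrite (cardsD1 l) lX => -[].
have pick x y : x != y -> x \in X -> y \in X -> x != l -> y != l ->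
    fW A u X (coord_form l) = A u`_x u`_y -> exists x' y',
    [/\ x' != y', X :\ l = [set x'; y'] & fW A u X (coord_form l) = A u`_x' u`_y'].
  by move=> xy xX yX xl yl ?; exists x, y; split=> //; apply: set2_of_card2; rewrite ?inE ?xl ?yl.
move: lX; rewrite memX !inE => /or3P[] /eqP le; subst l.
- by apply: (pick e1 e2); rewrite // value eqxx !neqF !scale0r scale1r addr0 add0r.
- by apply: (pick e2 e0); rewrite // value eqxx !neqF !scale0r scale1r !add0r.
- by apply: (pick e0 e1); rewrite // value eqxx !neqF !scale0r scale1r !addr0.
Qed.

(* [calB A u] unfolds to [iter _ (greedy_step (Ylist n) (Aval A u)) [::]]. *)
Lemma calB_fresh p : p \in calB A u ->
  p \in Ylist n /\ Aval A u p \notin prefix_span (Ylist n) (Aval A u) p.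
Proof. exact: greedy_iter_fresh. Qed.

Lemma memv_A_prefix_span p (x y : 'I_n) : p \in Ylist n -> x != y ->
  (sum_pow2 [set x; y] <= sum_pow2 [set p.1; p.2])%N -> [set x; y] != [set p.1; p.2] ->
  A u`_x u`_y \in prefix_span (Ylist n) (Aval A u) p.
Proof.
move=> pY xy; wlog lt_xy : x y xy / (x < y)%N.
  move=> wlog_xy; case: (ltngtP x y) => [lt_xy|lt_yx|/val_inj exy]; first exact: wlog_xy.
    rewrite setUC => le ne; apply: (memv_A_set2 (x := y) (y := x)).
    - by rewrite eq_sym.
    - exact: setUC.
    - by apply: wlog_xy; rewrite // eq_sym.
  by rewrite exy eqxx in xy.
move=> le ne; have lt_p : (p.1 < p.2)%N by rewrite -mem_Ylist.
have neq_p : p.1 != p.2 by rewrite neq_ltn lt_p.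
rewrite !sum_pow2_set2 // in le.
apply: memv_span; apply: (map_f (Aval A u) (x := (x, y))).
apply: (mem_take_index_pairwise (@colex_lt_asym n) (Ylist_colex n)); rewrite ?mem_Ylist //.
apply: colex_of_expn2_le => //; apply: contra ne => /eqP[ex ey].
by rewrite (val_inj ex) (val_inj ey).
Qed.

Lemma WB_free : free (WB A u).
Proof.
apply: (free_map_triangular (w := @sum_pow2 n) (enum_uniq _)) => X.
rewrite mem_enum inE => /andP[/eqP X3 /hasP[p pB /andP[p1X p2X]]].
have [pY p_fresh] := calB_fresh pB.
have neq_p : p.1 != p.2 by rewrite neq_ltn -mem_Ylist pY.
have : (0 < #|X :\ p.1 :\ p.2|)%N.
  move: X3; rewrite (cardsD1 p.1) (cardsD1 p.2) !inE p1X p2X eq_sym neq_p.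
  by move=> -[]; rewrite add0n => ->.
case/card_gt0P=> l; rewrite !inE => /and3P[l_p2 l_p1 lX].
have XDl2 : #|X :\ l| = 2 by move: X3; rewrite (cardsD1 l) lX => -[].
have XDl : X :\ l = [set p.1; p.2].
  by apply: set2_of_card2 => //; rewrite !inE ?p1X ?p2X andbT eq_sym.
exists (linfun (lfun_eval (coord_form l))), (prefix_span (Ylist n) (Aval A u) p).
rewrite lfun_evalE; split.
  have [x [y [xy XDl' ->]]] := fW_coord_in X3 lX.
  by apply: contra p_fresh; apply: (memv_A_set2 xy); rewrite -XDl' XDl.
move=> Z; rewrite mem_enum inE => /andP[/eqP Z3 _] ZX; rewrite lfun_evalE.
have [lZ|lZ] := boolP (l \in Z); last by rewrite fW_coord_notin ?rpred0.
have [x [y [xy ZDl ->]]] := fW_coord_in Z3 lZ.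
rewrite (sum_pow2D1 lZ) (sum_pow2D1 lX) leq_add2l ZDl XDl => le.
apply: memv_A_prefix_span => //; rewrite -ZDl -XDl.
by apply: contra ZX => /eqP ZX; rewrite -(setD1K lZ) -(setD1K lX) ZX.
Qed.

End AlternatingMap.

Theorem proposition2p7 (F : fieldType) (U V : vectType F) (A : U -> U -> V)
  (HAl : forall (x : U) (a : F) (y z : U), A (a *: y + z) x = a *: A y x + A z x)
  (HAr : forall (x : U) (a : F) (y z : U), A x (a *: y + z) = a *: A x y + A x z)
  (Halt : forall x : U, A x x = 0)
  (Hspan : forall W : {vspace V}, (forall x y : U, A x y \in W) -> W = fullv)
  (n : nat) (u : n.-tuple U) (Hu : basis_of fullv u) :
  free (WB A u)
  /\ {in calW A u &, injective (fW A u)}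
  /\ (forall w, w \in WB A u -> exists2 X, X \in calW A u & fW A u X = w).
Proof.
have WB_free := WB_free HAl HAr Halt (basis_free Hu).
split=> //; split; first exact/dinjectiveP/free_uniq.
by move=> w /imageP[X XW ->]; exists X.
Qed.
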